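(* Let $w$ be an instance of Metric-MAXCUT on a finite set $X$, let $\epsilon>0$, and let $(L,R)$ be a $(3+\epsilon)$-locally stable cut. Then $L$ or $R$ is a metric ball, i.e. a set of the form $\{y\in X: w(c,y)\le r\}$ for some $c\in X$ and $r\ge0$.
   Context: An instance of Metric-MAXCUT is a finite set $X$ with a metric $w$. For $x\in X$ and $B\subseteq X$, $w(x,B)=\sum_{b\in B}w(x,b)$. A cut $(L,R)$ (a partition of $X$) is $\gamma$-locally stable if $w(x,R)\ge\gamma w(x,L)$ for every $x\in L$ and $w(z,L)\ge\gamma w(z,R)$ for every $z\in R$. *)

From mathcomp Require Import all_boot all_order all_algebra.
Set Implicit Arguments. Unset Strict Implicit. Unset Printing Implicit Defensive.
Import Order.TTheory GRing.Theory Num.Theory.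
Local Open Scope ring_scope.

Definition is_metric (T : finType) (R : realFieldType) (w : T -> T -> R) : Prop :=
  [/\ forall x y, 0 <= w x y,
      forall x y, w x y = 0 <-> x = y,
      forall x y, w x y = w y x &
      forall x y z, w x z <= w x y + w y z].

Definition wset (T : finType) (R : realFieldType) (w : T -> T -> R) (x : T) (B : {set T}) : R :=
  \sum_(b in B) w x b.

Definition locally_stable (T : finType) (R : realFieldType) (w : T -> T -> R)
    (gamma : R) (L Rt : {set T}) : Prop :=
  (forall x, x \in L -> gamma * wset w x L <= wset w x Rt) /\
  (forall z, z \in Rt -> gamma * wset w z Rt <= wset w z L).

Definition is_ball (T : finType) (R : realFieldType) (w : T -> T -> R) (B : {set T}) : Prop :=
  exists c : T, exists r : R, 0 <= r /\ B = [set y | w c y <= r].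

From mathcomp Require Import all_boot all_order all_algebra.
From mathcomp Require Import lra.
From Stdlib Require Import Classical.
Set Implicit Arguments. Unset Strict Implicit. Unset Printing Implicit Defensive.
Import Order.TTheory GRing.Theory Num.Theory.
Local Open Scope ring_scope.

(* Let S be a side of a gamma-stable cut that is not a ball, and let d = w(c, y) be
   its diameter. One of c, y has total weight at least |S| d / 2 inside S; call it
   c'. Since S is not the ball of radius d around c', some z on the other side
   satisfies w(c', z) <= d. Chaining the stability of c' and of z through the
   triangle inequality gives |S| (gamma^2 - 3) <= 2 gamma |~S|. If neither side
   were a ball, adding the two bounds would give
   (|L| + |R|) (gamma - 3) (gamma + 1) <= 0, impossible for gamma > 3. *)

Lemma locally_stable_sym (T : finType) (R : realFieldType) (w : T -> T -> R)
    (g : R) (S S' : {set T}) :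
  locally_stable w g S S' -> locally_stable w g S' S.
Proof. by case. Qed.

Section MetricCut.

Variables (T : finType) (R : realFieldType) (w : T -> T -> R).
Hypothesis metric_w : is_metric w.

Lemma wset_triangle (x z : T) (B : {set T}) :
  wset w x B <= #|B|%:R * w x z + wset w z B.
Proof.
case: metric_w => _ _ _ wT.
rewrite /wset mulr_natl -sumr_const -big_split /=.
by apply: ler_sum => b _; apply: wT.
Qed.

Lemma exists_diametral_pair (S : {set T}) : S != set0 ->
  exists c y, [/\ c \in S, y \in S &
    forall u v, u \in S -> v \in S -> w u v <= w c y].
Proof.
case/set0Pn => c0 c0S.
pose inS2 (p : T * T) := (p.1 \in S) && (p.2 \in S).
have inS2c0 : inS2 (c0, c0) by rewrite /inS2 /= c0S.
case: (@arg_maxP _ _ _ (c0, c0) inS2 (fun p => w p.1 p.2) inS2c0).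
move=> [c y] /andP [/= cS yS] pmax; exists c, y; split=> // u v uS vS.
by apply: (pmax (u, v)); rewrite /inS2 /= uS vS.
Qed.

Lemma exists_heavy_end (S : {set T}) (c y : T) : c \in S -> y \in S ->
  exists2 c', c' \in S & #|S|%:R * w c y <= 2 * wset w c' S.
Proof.
case: metric_w => _ _ wC wT cS yS.
have sum_ends : #|S|%:R * w c y <= wset w c S + wset w y S.
  rewrite /wset -big_split /= mulr_natl -sumr_const.
  by apply: ler_sum => x _; rewrite (wC y x); apply: wT.
by case: (leP (wset w c S) (wset w y S)) => ?; [exists y | exists c] => //; lra.
Qed.

Lemma not_ball_exists_close_out (S : {set T}) (u : T) (r : R) :
  ~ is_ball w S -> 0 <= r -> (forall v, v \in S -> w u v <= r) ->
  exists2 z, z \notin S & w u z <= r.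
Proof.
move=> nball r0 close_in.
case: (boolP [exists z in ~: S, w u z <= r]).
  by case/existsP => z /andP [zS uz]; exists z; rewrite // -in_setC.
move/existsPn => far_out; exfalso; apply: nball; exists u, r; split=> //.
apply/setP => v; rewrite inE; case vS: (v \in S); first by rewrite close_in.
by have := far_out v; rewrite inE vS => /negbTE.
Qed.

Lemma not_ball_diameter_gt0 (S : {set T}) (c y : T) : ~ is_ball w S ->
  c \in S -> (forall u v, u \in S -> v \in S -> w u v <= w c y) -> 0 < w c y.
Proof.
case: metric_w => w0 w0E _ _ nball cS diam.
rewrite lt_neqAle w0 andbT; apply/negP => /eqP d0.
apply: nball; exists c, (w c y); split=> //.
apply/setP => v; rewrite inE; apply/idP/idP => [vS | cv].
  exact: diam.
suff -> : v = c by [].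
by apply/esym/w0E/le_anti; rewrite w0 andbT d0.
Qed.

Lemma not_ball_stable_card_bound (g : R) (S : {set T}) :
  1 <= g -> locally_stable w g S (~: S) -> ~ is_ball w S ->
  #|S|%:R * (g ^+ 2 - 3) <= 2 * g * #|~: S|%:R.
Proof.
move=> g1 [stableS stableC] nball.
have [-> | S0] := eqVneq S set0.
  by rewrite cards0 mul0r; apply: mulr_ge0 => //; lra.
have [c [y [cS yS diam]]] := exists_diametral_pair S0.
have [c' c'S heavy] := exists_heavy_end cS yS.
set d := w c y in diam heavy.
have d_gt0 : 0 < d := not_ball_diameter_gt0 nball cS diam.
have [z zS c'z] := not_ball_exists_close_out nball (ltW d_gt0) (diam c' ^~ c'S).
have zC : z \in ~: S by rewrite in_setC.
have zc' : w z c' <= d by case: metric_w => _ _ -> _.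
set a : R := #|S|%:R; set b : R := #|~: S|%:R.
have a0 : 0 <= a := ler0n _ _.
have b0 : 0 <= b := ler0n _ _.
have out_c' : wset w c' (~: S) <= b * d + wset w z (~: S).
  apply: le_trans (wset_triangle c' z _) _; rewrite lerD2r.
  by rewrite ler_wpM2l.
have in_z : wset w z S <= a * d + wset w c' S.
  apply: le_trans (wset_triangle z c' _) _; rewrite lerD2r.
  by rewrite ler_wpM2l.
have stab_c' := stableS c' c'S.
have stab_z := stableC z zC.
(* gamma^2 w(c',S) <= gamma w(c',~S) <= gamma b d + w(z,S) <= gamma b d + a d + w(c',S) *)
have chain : (g ^+ 2 - 1) * wset w c' S <= g * b * d + a * d.
  have gg : g * (g * wset w c' S) <= g * wset w c' (~: S) by rewrite ler_wpM2l //; lra.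
  have gz : g * wset w c' (~: S) <= g * (b * d) + g * wset w z (~: S).
    by rewrite -mulrDr ler_wpM2l //; lra.
  nra.
have : a * (g ^+ 2 - 3) * d <= 2 * g * b * d.
  have : 0 <= (g ^+ 2 - 1) * (2 * wset w c' S - a * d) by apply: mulr_ge0; nra.
  nra.
by rewrite ler_pM2r.
Qed.

End MetricCut.

Theorem theorem5 (T : finType) (R : realFieldType) (w : T -> T -> R)
    (eps : R) (L Rt : {set T}) :
  is_metric w -> 0 < eps ->
  (0 < #|T|)%N ->
  Rt = ~: L ->
  locally_stable w (3 + eps) L Rt ->
  is_ball w L \/ is_ball w Rt.
Proof.
move=> metric_w eps_gt0 T_gt0 -> stable.
case: (classic (is_ball w L)) => [| nballL]; first by left.
case: (classic (is_ball w (~: L))) => [| nballC]; first by right.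
have g1 : 1 <= 3 + eps by lra.
have boundL := not_ball_stable_card_bound metric_w g1 stable nballL.
have stableC : locally_stable w (3 + eps) (~: L) (~: ~: L).
  by rewrite setCK; apply: locally_stable_sym.
have boundC := not_ball_stable_card_bound metric_w g1 stableC nballC.
rewrite setCK in boundC.
have card_sum : #|L|%:R + #|~: L|%:R = #|T|%:R :> R by rewrite -natrD cardsC.
have : (0 : R) < #|T|%:R by rewrite ltr0n.
(* (3 + eps)^2 - 2 (3 + eps) - 3 = eps (4 + eps) > 0 *)
nra.
Qed.
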